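(* Let $k\ge 2$ be a natural number and $H$ a graph. Then $H\in\mathcal{H}_k$ if and only if every shortcut tree for $H$ (with respect to any length-function on $T\cup H$) has at most $k$ leaves.
   Context: All graphs are finite; parallel edges are allowed, loops are not. A length-function on a graph $G$ is a map $\ell:E(G)\to\mathbb{R}^+$ (strictly positive reals); $\ell(H)=\sum_{e\in E(H)}\ell(e)$ for subgraphs $H$, which carry the restricted length-function. $\mathrm{sd}_G(A)$ is the minimum of $\ell(S)$ over connected subgraphs $S\subseteq G$ with $A\subseteq V(S)$ ($\infty$ if none). $H\subseteq G$ is $k$-geodesic in $G$ if $\mathrm{sd}_H(A)=\mathrm{sd}_G(A)$ for all $A\subseteq V(H)$ with $|A|\le k$, and fully geodesic if it is $k$-geodesic for all $k$. For $k\ge2$, $\mathcal{H}_k$ is the class of all graphs $H$ such that for every graph $G\supseteq H$ and every length-function on $G$ for which $H$ is $k$-geodesic in $G$, $H$ is fully geodesic in $G$. $L(T)$ is the set of leaves of a tree $T$. Shortcut tree: let $H$ be a graph, $T$ a tree, both subgraphs of $T\cup H$, and $\ell$ a length-function on $T\cup H$. Then $T$ is a shortcut tree for $H$ if (SCT1) $V(T)\cap V(H)=L(T)$; (SCT2) $E(T)\cap E(H)=\emptyset$; (SCT3) $\ell(T)<\mathrm{sd}_H(L(T))$; (SCT4) for every proper subset $B\subsetneq L(T)$, $\mathrm{sd}_H(B)\le\mathrm{sd}_T(B)$. *)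

From HB Require Import structures.
From mathcomp Require Import all_boot all_order all_algebra.
Set Implicit Arguments. Unset Strict Implicit. Unset Printing Implicit Defensive.
Import Order.TTheory GRing.Theory Num.Theory.
Local Open Scope ring_scope.

(* A finite multigraph: finite vertex and edge types; each edge has two
   distinct endpoints (parallel edges allowed, no loops). *)
Record graph := Graph {
  gV : finType;
  gE : finType;
  gends : gE -> gV * gV;
  gnoloop : forall e, (gends e).1 != (gends e).2 }.

Section Graphs.
Variable G : graph.

Definition joins (e : gE G) (x y : gV G) : bool :=
  (gends e == (x, y)) || (gends e == (y, x)).

Definition subgraphb (VS : {set gV G}) (ES : {set gE G}) : bool :=
  [forall e in ES, ((gends e).1 \in VS) && ((gends e).2 \in VS)].

Definition adj (ES : {set gE G}) : rel (gV G) :=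
  fun x y => [exists e in ES, joins e x y].

Definition connectedb (VS : {set gV G}) (ES : {set gE G}) : bool :=
  [forall x in VS, forall y in VS, connect (adj ES) x y].

Definition treeb (VS : {set gV G}) (ES : {set gE G}) : bool :=
  [&& subgraphb VS ES, VS != set0, connectedb VS ES &
      [forall e in ES, ~~ connectedb VS (ES :\ e)]].

Definition degree (ES : {set gE G}) (v : gV G) : nat :=
  #|[set e in ES | ((gends e).1 == v) || ((gends e).2 == v)]|.

Definition leaves (VS : {set gV G}) (ES : {set gE G}) : {set gV G} :=
  [set v in VS | degree ES v == 1%N].

Variable R : realFieldType.

Definition len (l : gE G -> R) (ES : {set gE G}) : R := \sum_(e in ES) l e.

(* option R models R \cup {infinity}; None = infinity *)
Definition omin (x y : option R) : option R :=
  match x, y with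
  | None, _ => y
  | _, None => x
  | Some a, Some b => Some (Num.min a b)
  end.

Definition sd (l : gE G -> R) (VS : {set gV G}) (ES : {set gE G})
    (A : {set gV G}) : option R :=
  \big[omin/None]_(p : {set gV G} * {set gE G} |
      [&& subgraphb p.1 p.2, p.1 \subset VS, p.2 \subset ES,
          connectedb p.1 p.2 & A \subset p.1])
    Some (len l p.2).

End Graphs.

Definition ole {R : realFieldType} (x y : option R) : bool :=
  match x, y with
  | _, None => true
  | None, Some _ => false
  | Some a, Some b => a <= b
  end.

Definition olt {R : realFieldType} (x y : option R) : bool :=
  match x, y with
  | None, _ => false
  | Some _, None => true
  | Some a, Some b => a < b
  end.

Definition embedding (H G : graph) (f : gV H -> gV G) (g : gE H -> gE G) : Prop :=
  injective f /\ injective g /\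
  forall e, joins (g e) (f (gends e).1) (f (gends e).2).

Definition lengthfun (G : graph) (R : realFieldType) (l : gE G -> R) : Prop :=
  forall e, 0 < l e.

Definition k_geodesic (R : realFieldType) (k : nat) (H G : graph)
    (f : gV H -> gV G) (g : gE H -> gE G) (l : gE G -> R) : Prop :=
  forall A : {set gV H}, (#|A| <= k)%N ->
    sd (l \o g) [set: gV H] [set: gE H] A = sd l [set: gV G] [set: gE G] (f @: A).

Definition fully_geodesic (R : realFieldType) (H G : graph)
    (f : gV H -> gV G) (g : gE H -> gE G) (l : gE G -> R) : Prop :=
  forall k, k_geodesic k f g l.

Definition in_Hk (R : realFieldType) (k : nat) (H : graph) : Prop :=
  forall (G : graph) (f : gV H -> gV G) (g : gE H -> gE G) (l : gE G -> R),
    embedding f g -> lengthfun l ->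
    k_geodesic k f g l -> fully_geodesic f g l.

(* G = T \cup H where H is embedded via (f, g) and T = (VT, ET) is a subgraph
   of G; T is a shortcut tree for H w.r.t. the length-function l on G. *)
Definition shortcut_tree (R : realFieldType) (H G : graph)
    (f : gV H -> gV G) (g : gE H -> gE G)
    (VT : {set gV G}) (ET : {set gE G}) (l : gE G -> R) : Prop :=
  (forall v : gV G, v \in VT \/ v \in f @: [set: gV H]) /\
  (forall e : gE G, e \in ET \/ e \in g @: [set: gE H]) /\
  treeb VT ET /\
  VT :&: (f @: [set: gV H]) = leaves VT ET /\
  ET :&: (g @: [set: gE H]) = set0 /\
  olt (Some (len l ET))
                 (sd (l \o g) [set: gV H] [set: gE H] (f @^-1: leaves VT ET)) /\
  (forall B : {set gV G}, B \proper leaves VT ET ->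
                ole (sd (l \o g) [set: gV H] [set: gE H] (f @^-1: B))
                    (sd l VT ET B)).

(* If T is a shortcut tree with leaf set L, then H is not fully geodesic in
   G = H + T, by SCT3. It is, however, k-geodesic for every k < |L|: a connected
   subgraph S of G containing f(A), |A| < |L|, can be traded for a subgraph of H
   that is no longer, by induction on the number of tree edges of S. Let C be a
   component of the tree edges of S. If C misses a leaf, SCT4 joins the leaves
   of C inside H at no greater cost, and that subgraph replaces C. If C
   contains all leaves, then, as |A| < |L|, some leaf x has no vertex of f(A) on
   its side of its pendant edge, so that side and the pendant edge can be cut off.
   Conversely, if H is k-geodesic but not fully geodesic, take A minimal with
   sd_H(A) > sd_G(f(A)), so |A| > k. A minimal Steiner subgraph of f(A) in G has
   its leaves in f(A); a copy of it, attached to A by short pendant edges, is a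
   shortcut tree with leaf set A: SCT3 holds because the pendant edges are short,
   SCT4 by the minimality of A. *)

From HB Require Import structures.
From mathcomp Require Import all_boot all_order all_algebra.
From mathcomp Require Import ring lra.
Set Implicit Arguments. Unset Strict Implicit. Unset Printing Implicit Defensive.
Import Order.TTheory GRing.Theory Num.Theory.
Local Open Scope ring_scope.

Section OptionOrder.
Variable R : realFieldType.
Implicit Types x y z : option R.

Lemma ole_trans x y z : ole x y -> ole y z -> ole x z.
Proof. by case: x; case: y; case: z => //= a b c; apply: le_trans. Qed.

Lemma ole_anti x y : ole x y -> ole y x -> x = y.
Proof. by case: x; case: y => //= a b h1 h2; congr Some; apply/eqP; rewrite eq_le h1 h2. Qed.

Lemma ole_olt_trans x y z : ole x y -> olt y z -> olt x z.
Proof. by case: x; case: y; case: z => //= a b c; apply: le_lt_trans. Qed.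

Lemma oltxx x : olt x x = false.
Proof. by case: x => //= a; rewrite ltxx. Qed.

Lemma oltNge x y : olt y x = ~~ ole x y.
Proof. by case: x; case: y => //= a b; rewrite ltNge. Qed.

Lemma omin_lel x y : ole (omin x y) x.
Proof. by case: x; case: y => //= a b; rewrite ge_min lexx ?orbT. Qed.

Lemma omin_ler x y : ole (omin x y) y.
Proof. by case: x; case: y => //= a b; rewrite ge_min lexx ?orbT. Qed.

Variables (T : finType) (P : pred T) (F : T -> R).

Lemma big_omin_le i : P i -> ole (\big[@omin R/None]_(j | P j) Some (F j)) (Some (F i)).
Proof.
have : i \in index_enum T by rewrite mem_index_enum.
elim: (index_enum T) => [|j r IH] //=; rewrite big_cons inE => /orP [/eqP <- -> | ir Pi].
  exact: omin_lel.
case: (P j); last exact: IH.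
exact: ole_trans (omin_ler _ _) (IH ir Pi).
Qed.

Lemma big_omin_attained : \big[@omin R/None]_(j | P j) Some (F j) = None \/
  exists2 i, P i & \big[@omin R/None]_(j | P j) Some (F j) = Some (F i).
Proof.
elim: (index_enum T) => [|j r IH]; first by rewrite big_nil; left.
rewrite big_cons; case: (P j) / idP => [Pj|//].
case: IH => [->|[i Pi ->]]; first by right; exists j.
by right; rewrite /= /Num.min; case: ifP => _; [exists j | exists i].
Qed.

End OptionOrder.

Lemma connect_homo (T1 T2 : finType) (e1 : rel T1) (e2 : rel T2) (phi : T1 -> T2) x y :
  connect e1 x y -> (forall a b, e1 a b -> connect e2 (phi a) (phi b)) ->
  connect e2 (phi x) (phi y).
Proof.
move=> /connectP [p pth ->] H; elim: p x pth => [|z p IH] x /=; first by rewrite connect0.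
by case/andP => /H exz /IH; apply: connect_trans.
Qed.

Lemma imset_preimset (T T' : finType) (h : T -> T') (X : {set T'}) :
  X \subset h @: [set: T] -> h @: (h @^-1: X) = X.
Proof.
move=> sX; apply/setP => y; apply/imsetP/idP => [[x] | yX]; first by rewrite inE => hx ->.
by case/imsetP: (subsetP sX _ yX) => x _ yx; exists x; rewrite // inE -yx.
Qed.

Lemma preimset_imset (T T' : finType) (h : T -> T') (X : {set T}) :
  injective h -> h @^-1: (h @: X) = X.
Proof. by move=> hi; apply/setP => x; rewrite inE mem_imset. Qed.

Section Graph.
Variable G : graph.
Implicit Types (VS A : {set gV G}) (ES : {set gE G}) (e : gE G) (u v w x y : gV G).

Definition steinerb VS ES A (p : {set gV G} * {set gE G}) : bool :=
  [&& subgraphb p.1 p.2, p.1 \subset VS, p.2 \subset ES, connectedb p.1 p.2 & A \subset p.1].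

Definition incid e v := ((gends e).1 == v) || ((gends e).2 == v).

Definition other_end e v := if (gends e).1 == v then (gends e).2 else (gends e).1.

Lemma joinsC e x y : joins e x y = joins e y x.
Proof. by rewrite /joins orbC. Qed.

Lemma joins_ends e x y : joins e x y ->
  (x = (gends e).1 /\ y = (gends e).2) \/ (x = (gends e).2 /\ y = (gends e).1).
Proof. by case/orP => /eqP ->; [left | right]. Qed.

Lemma joins_gends e : joins e (gends e).1 (gends e).2.
Proof. by rewrite /joins -surjective_pairing eqxx. Qed.

Lemma incid_gends e : incid e (gends e).1 /\ incid e (gends e).2.
Proof. by rewrite /incid !eqxx orbT. Qed.

Lemma joins_incid e x y : joins e x y -> incid e x /\ incid e y.
Proof. by case/joins_ends => -[-> ->]; case: (incid_gends e). Qed.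

Lemma other_end_neq e v : incid e v -> other_end e v != v.
Proof.
rewrite /incid /other_end; case: ifP => [/eqP <- _|-> //]; by rewrite eq_sym gnoloop.
Qed.

Lemma joins_other_end e v : incid e v -> joins e v (other_end e v).
Proof.
rewrite /incid /other_end /joins.
by case: ifP => [/eqP <- | _ /= /eqP <-]; rewrite -surjective_pairing eqxx ?orbT.
Qed.

Lemma joins_incidE e v x y : incid e v -> joins e x y ->
  (x = v /\ y = other_end e v) \/ (x = other_end e v /\ y = v).
Proof.
rewrite /incid /other_end => ev /joins_ends [] [-> ->]; case: ifP => [/eqP ->|h];
  by [left | right | move: ev; rewrite h => /eqP ->; right | move: ev; rewrite h => /eqP ->; left].
Qed.

Lemma adjP ES x y : reflect (exists2 e, e \in ES & joins e x y) (adj ES x y).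
Proof.
apply: (iffP existsP) => [[e /andP [eE j]]|[e eE j]]; first by exists e.
by exists e; rewrite eE.
Qed.

Lemma adj_sym ES : symmetric (adj ES).
Proof. by move=> x y; apply/adjP/adjP => -[e eE j]; exists e; rewrite // joinsC. Qed.

Lemma connect_adjC ES x y : connect (adj ES) x y = connect (adj ES) y x.
Proof. exact: sym_connect_sym (adj_sym ES) x y. Qed.

Lemma adj_gends ES e : e \in ES -> adj ES (gends e).1 (gends e).2.
Proof. by move=> eE; apply/adjP; exists e => //; apply: joins_gends. Qed.

Lemma connect_adj_subset ES ES' x y :
  ES \subset ES' -> connect (adj ES) x y -> connect (adj ES') x y.
Proof.
move=> sub; apply: connect_sub => u v /adjP [e eE j]; apply: connect1; apply/adjP.
by exists e => //; apply: (subsetP sub).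
Qed.

Lemma subgraphP VS ES :
  reflect (forall e, e \in ES -> (gends e).1 \in VS /\ (gends e).2 \in VS) (subgraphb VS ES).
Proof. by apply: (iffP forall_inP) => H e /H /andP. Qed.

Lemma subgraph_subset VS ES ES' : subgraphb VS ES -> ES' \subset ES -> subgraphb VS ES'.
Proof. by move=> /subgraphP sg sub; apply/subgraphP => e /(subsetP sub) /sg. Qed.

Lemma connect_subgraph VS ES x y :
  subgraphb VS ES -> x \in VS -> connect (adj ES) x y -> y \in VS.
Proof.
move=> /subgraphP sg xV /connectP [p pth ->]; elim: p x xV pth => [|z p IH] x xV //=.
by case/andP => /adjP [e /sg [h1 h2] /joins_ends [] [_ ->]] /IH; apply.
Qed.

Lemma connectedP VS ES :
  reflect {in VS &, forall x y, connect (adj ES) x y} (connectedb VS ES).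
Proof.
apply: (iffP forall_inP) => [H x y /H /forall_inP|H x xV]; first exact.
by apply/forall_inP => y; apply: H.
Qed.

Lemma connect_incid ES x y : connect (adj ES) x y -> x != y ->
  exists2 e, e \in ES & incid e x.
Proof.
case/connectP => -[|z p] /=; first by move=> _ ->; rewrite eqxx.
by case/andP => /adjP [e eE /joins_incid []] ex _ _ _; exists e.
Qed.

Lemma connect_setD1 ES e w z : connect (adj ES) w z ->
  [\/ connect (adj (ES :\ e)) w z, connect (adj (ES :\ e)) w (gends e).1 |
      connect (adj (ES :\ e)) w (gends e).2].
Proof.
case/connectP => p pth ->; elim: p w pth => [|y p IH] w /=; first by constructor 1.
case/andP => /adjP [e1 e1E j] /IH IHy.
have [ee|ne] := eqVneq e1 e.
  by rewrite ee in j; case: (joins_ends j) => [] [-> _]; [constructor 2 | constructor 3];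
    rewrite connect0.
have a : adj (ES :\ e) w y by apply/adjP; exists e1; rewrite ?inE ?ne.
by case: IHy => h; [constructor 1 | constructor 2 | constructor 3];
  apply: connect_trans (connect1 a) h.
Qed.

Lemma connect_del_pendant ES e v x y : e \in ES ->
  (forall e', e' \in ES -> incid e' v -> e' = e) -> incid e v ->
  x != v -> y != v -> connect (adj ES) x y -> connect (adj (ES :\ e)) x y.
Proof.
move=> eE uniq ev xv yv cxy.
pose phi w := if w == v then other_end e v else w. (* contracts [e] *)
suff : connect (adj (ES :\ e)) (phi x) (phi y) by rewrite /phi (negPf xv) (negPf yv).
apply: (connect_homo cxy) => a b /adjP [e' e'E j].
have [ee|ne] := eqVneq e' e.
  rewrite ee in j; case: (joins_incidE ev j) => -[-> ->];
  by rewrite /phi eqxx (negPf (other_end_neq ev)) connect0.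
have : ~~ incid e' v by apply: contra ne => /(uniq _ e'E) ->.
rewrite /incid negb_or => /andP [n1 n2].
apply: connect1; apply/adjP; exists e'; first by rewrite !inE ne.
case: (joins_ends j) => -[-> ->]; rewrite /phi (negPf n1) (negPf n2); last rewrite joinsC;
  exact: joins_gends.
Qed.

Lemma degree_gt1 ES v e1 e2 : e1 \in ES -> e2 \in ES ->
  e1 != e2 -> incid e1 v -> incid e2 v -> (1 < degree ES v)%N.
Proof. by move=> h1 h2 ne i1 i2; apply/card_gt1P; exists e1, e2; rewrite !inE h1 h2. Qed.

Definition component ES u := [set w | connect (adj ES) u w].
Definition component_edges ES u := [set e in ES | (gends e).1 \in component ES u].

Lemma component_gends ES u e :
  e \in ES -> ((gends e).1 \in component ES u) = ((gends e).2 \in component ES u).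
Proof.
move=> eE; rewrite !inE; apply: same_connect_r; first exact: sym_connect_sym (adj_sym ES).
exact: connect1 (adj_gends eE).
Qed.

Lemma component_subgraph ES u : subgraphb (component ES u) (component_edges ES u).
Proof.
apply/subgraphP => e; rewrite inE => /andP [eE h]; split => //.
by rewrite -component_gends.
Qed.

Lemma component_connected ES u : connectedb (component ES u) (component_edges ES u).
Proof.
suff hub w : w \in component ES u -> connect (adj (component_edges ES u)) u w.
  apply/connectedP => x y /hub ux /hub uy.
  by apply: connect_trans uy; rewrite connect_adjC.
rewrite inE => /connectP [p pth ->].
suff walk x : x \in component ES u -> path (adj ES) x p ->
    connect (adj (component_edges ES u)) x (last x p).
  by apply: walk pth; rewrite inE connect0.
elim: p x {pth} => [|z p IH] x xC /=; first by rewrite connect0.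
case/andP => /adjP [e eE j] pth.
have eC : e \in component_edges ES u.
  by rewrite inE eE; case: (joins_ends j) xC => -[-> _] //; rewrite component_gends.
have zC : z \in component ES u.
  by case: (joins_ends j) xC => -[-> ->] //; rewrite component_gends.
by apply: connect_trans (connect1 _) (IH _ zC pth); apply/adjP; exists e.
Qed.

Lemma component_edges_subset ES u : component_edges ES u \subset ES.
Proof. by apply/subsetP => e; rewrite inE => /andP []. Qed.

Variable R : realFieldType.
Implicit Types (l : gE G -> R) (X Y : {set gE G}).

Lemma len_ge0 l X : lengthfun l -> 0 <= len l X.
Proof. by move=> lf; apply: sumr_ge0 => e _; apply: ltW. Qed.

Lemma len_setD l X Y : Y \subset X -> len l X = len l Y + len l (X :\: Y).
Proof. by move=> sub; rewrite /len (big_setID (A := X) Y) /= (setIidPr sub). Qed.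

Lemma len_subset l X Y : lengthfun l -> X \subset Y -> len l X <= len l Y.
Proof. by move=> lf sub; rewrite (len_setD l sub) lerDl len_ge0. Qed.

Lemma len_setD1 l X e : e \in X -> len l X = l e + len l (X :\ e).
Proof. by move=> eX; rewrite /len (big_setD1 e eX). Qed.

Lemma len_setU l X Y : lengthfun l -> len l (X :|: Y) <= len l X + len l Y.
Proof.
move=> lf; rewrite (@len_setD l (X :|: Y) X) ?subsetUl // lerD2l.
by apply: len_subset => //; apply/subsetP => e; rewrite !inE; case: (e \in X).
Qed.

Lemma sd_le_steiner l VS ES A p : steinerb VS ES A p -> ole (sd l VS ES A) (Some (len l p.2)).
Proof. exact: (@big_omin_le _ _ (steinerb VS ES A) (fun p => len l p.2)). Qed.

Lemma sd_attained l VS ES A : sd l VS ES A = None \/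
  exists2 p, steinerb VS ES A p & sd l VS ES A = Some (len l p.2).
Proof. exact: (@big_omin_attained _ _ (steinerb VS ES A) (fun p => len l p.2)). Qed.

Lemma sd_SomeP l VS ES A m : sd l VS ES A = Some m ->
  exists2 p, steinerb VS ES A p & len l p.2 = m /\
    forall q, steinerb VS ES A q -> m <= len l q.2.
Proof.
case: (sd_attained l VS ES A) => [->//|[p w sdE]]; rewrite sdE => -[<-].
by exists p => //; split => // q /(sd_le_steiner l); rewrite sdE.
Qed.

End Graph.

Lemma sd_le_dominated (R : realFieldType) (G1 G2 : graph) (l1 : gE G1 -> R)
    (l2 : gE G2 -> R) V1 E1 A1 V2 E2 A2 :
  (forall q, steinerb V2 E2 A2 q ->
     exists2 p, steinerb V1 E1 A1 p & len l1 p.2 <= len l2 q.2) ->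
  ole (sd l1 V1 E1 A1) (sd l2 V2 E2 A2).
Proof.
move=> H; case: (sd_attained l2 V2 E2 A2) => [->|[q /H [p wp le] ->]].
  by case: (sd _ _ _ _).
exact: ole_trans (sd_le_steiner l1 wp) _.
Qed.

Section Image.
Variables (G1 G2 : graph) (phi : gV G1 -> gV G2) (psi : gE G1 -> gE G2).

Lemma joins_image e a b : joins (psi e) (phi (gends e).1) (phi (gends e).2) ->
  joins e a b -> joins (psi e) (phi a) (phi b).
Proof. by move=> j /joins_ends [] [-> ->] //; rewrite joinsC. Qed.

Lemma connected_image (D : {set gE G1}) (VP : {set gV G1}) (EP : {set gE G1}) :
  subgraphb VP EP -> connectedb VP EP ->
  (forall e, e \in EP -> e \in D -> joins (psi e) (phi (gends e).1) (phi (gends e).2)) ->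
  (forall e, e \in EP -> e \notin D -> phi (gends e).1 = phi (gends e).2) ->
  subgraphb (phi @: VP) (psi @: (EP :&: D)) && connectedb (phi @: VP) (psi @: (EP :&: D)).
Proof.
move=> /subgraphP sg /connectedP cn HD HnD; apply/andP; split.
  apply/subgraphP => _ /imsetP [e /setIP [eP eD] ->]; case: (sg e eP) => h1 h2.
  by case: (joins_ends (HD e eP eD)) => -[<- <-]; rewrite !imset_f.
apply/connectedP => _ _ /imsetP [x xV ->] /imsetP [y yV ->].
apply: (connect_homo (cn x y xV yV)) => a b /adjP [e eP j].
case: (boolP (e \in D)) => eD.
  apply: connect1; apply/adjP; exists (psi e); first by rewrite imset_f // inE eP eD.
  exact: joins_image (HD e eP eD) j.
by case: (joins_ends j) => -[-> ->]; rewrite (HnD e eP eD) connect0.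
Qed.

End Image.

Lemma len_imset (R : realFieldType) (H G : graph) (g : gE H -> gE G) (l : gE G -> R)
    (X : {set gE H}) : injective g -> len l (g @: X) = len (l \o g) X.
Proof. by move=> ig; rewrite /len big_imset //= => x y _ _; apply: ig. Qed.

Lemma sd_embedding_le (R : realFieldType) (H G : graph) (f : gV H -> gV G)
    (g : gE H -> gE G) (l : gE G -> R) (A : {set gV H}) : embedding f g ->
  ole (sd l [set: gV G] [set: gE G] (f @: A)) (sd (l \o g) [set: gV H] [set: gE H] A).
Proof.
move=> [fi [gi fj]]; apply: sd_le_dominated => -[VP EP] /and5P [sg _ _ cn sA].
exists (f @: VP, g @: EP); last by rewrite /= len_imset.
have nD e : e \in EP -> e \notin [set: gE H] -> f (gends e).1 = f (gends e).2.
  by rewrite inE.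
have /andP [] := connected_image sg cn (fun e _ _ => fj e) nD.
by rewrite setIT /steinerb /= => -> ->; rewrite !subsetT imsetS.
Qed.

Section MinimalSteiner.
Variables (R : realFieldType) (G : graph) (l : gE G -> R).
Variables (X VS : {set gV G}) (ES : {set gE G}).
Hypothesis lf : lengthfun l.
Hypotheses (sgS : subgraphb VS ES) (cnS : connectedb VS ES) (sXS : X \subset VS).
Hypothesis minS :
  forall q, steinerb [set: gV G] [set: gE G] X q -> len l ES <= len l q.2.

Lemma min_steiner_setD1 e (q : {set gV G} * {set gE G}) : e \in ES -> q.2 \subset ES :\ e ->
  ~~ steinerb [set: gV G] [set: gE G] X q.
Proof.
move=> eE sub; apply/negP => /minS; rewrite (len_setD1 l eE) => le.
have := le_trans le (len_subset lf sub); have := lf e; lra.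
Qed.

Lemma min_steiner_bridge e : e \in ES -> ~~ connectedb VS (ES :\ e).
Proof.
move=> eE; apply: contraNN (min_steiner_setD1 (q := (VS, ES :\ e)) eE (subxx _)) => cn.
by rewrite /steinerb /= cn sXS !subsetT (subgraph_subset sgS (subsetDl _ _)).
Qed.

Lemma min_steiner_leaf v : v \in VS -> degree ES v = 1%N -> v \in X.
Proof.
move=> vV /eqP/cards1P [e He].
have : e \in [set e] by rewrite inE.
rewrite -He inE => /andP [eE ev].
have uniq e' : e' \in ES -> incid e' v -> e' = e.
  by move=> e'E e'v; apply/set1P; rewrite -He inE e'E.
apply: contraT => vX; case/negP: (min_steiner_setD1 (q := (VS :\ v, ES :\ e)) eE (subxx _)).
rewrite /steinerb /= !subsetT /=; apply/and3P; split.
- apply/subgraphP => e'; rewrite !inE => /andP [ne e'E].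
  have : ~~ incid e' v by apply: contra ne => /(uniq _ e'E) ->.
  rewrite /incid negb_or => /andP [n1 n2].
  by have /subgraphP/(_ e' e'E) [-> ->] := sgS; rewrite n1 n2.
- apply/connectedP => x y; rewrite !inE => /andP [xv xV] /andP [yv yV].
  exact: connect_del_pendant eE uniq ev xv yv (connectedP _ _ cnS x y xV yV).
- apply/subsetP => x xX; rewrite !inE (subsetP sXS _ xX) andbT.
  by apply: contraNneq vX => <-.
Qed.

End MinimalSteiner.

Section ShortcutFromSteiner.
Variables (R : realFieldType) (H G : graph) (f : gV H -> gV G) (g : gE H -> gE G).
Variables (l : gE G -> R) (A : {set gV H}) (VS : {set gV G}) (ES : {set gE G}) (eps : R).
Hypotheses (emb : embedding f g) (lf : lengthfun l) (eps_gt0 : 0 < eps).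
Hypotheses (sgS : subgraphb VS ES) (cnS : connectedb VS ES) (sAS : f @: A \subset VS).
Hypothesis minS :
  forall q, steinerb [set: gV G] [set: gE G] (f @: A) q -> len l ES <= len l q.2.

Definition steiner_vert := {v : gV G | v \in VS}.
Definition steiner_edge := {e : gE G | e \in ES}.
Definition terminal := {a : gV H | a \in A}.

Variable s0 : steiner_vert.

Definition to_steiner (w : gV G) : steiner_vert := insubd s0 w.

Lemma to_steinerK w : w \in VS -> val (to_steiner w) = w.
Proof. by move=> wV; rewrite /to_steiner insubdK. Qed.

Lemma steiner_gends (e : steiner_edge) : (gends (val e)).1 \in VS /\ (gends (val e)).2 \in VS.
Proof. by move/subgraphP: sgS; apply; apply: valP. Qed.

Lemma terminal_in (a : terminal) : f (val a) \in VS.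
Proof. by apply: (subsetP sAS); rewrite imset_f ?(valP a). Qed.

(* The graph H + T, where the tree T is a copy of (VS, ES) together with a
   pendant edge from each a in A to the copy of f a. *)
Definition ext_ends (e : gE H + (steiner_edge + terminal)) :
    (gV H + steiner_vert) * (gV H + steiner_vert) :=
  match e with
  | inl e => (inl (gends e).1, inl (gends e).2)
  | inr (inl e) => (inr (to_steiner (gends (val e)).1), inr (to_steiner (gends (val e)).2))
  | inr (inr a) => (inl (val a), inr (to_steiner (f (val a))))
  end.

Lemma ext_noloop e : (ext_ends e).1 != (ext_ends e).2.
Proof.
case: e => [e|[e|a]] //=; first by apply: contra (gnoloop e) => /eqP [->].
apply: contra (gnoloop (val e)) => /eqP [] /(congr1 val).
by case: (steiner_gends e) => h1 h2; rewrite !to_steinerK // => ->.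
Qed.

Definition ext_graph := Graph ext_noloop.

Definition ext_f : gV H -> gV ext_graph := inl.
Definition ext_g : gE H -> gE ext_graph := inl.

Definition ext_len (e : gE ext_graph) : R :=
  match e with inl e => l (g e) | inr (inl e) => l (val e) | inr (inr _) => eps end.

Definition tree_V : {set gV ext_graph} := [set v | if v is inl a then a \in A else true].
Definition tree_E : {set gE ext_graph} := [set e | if e is inl _ then false else true].

Lemma inl_eq (a b : gV H) : (inl a == inl b :> gV ext_graph) = (a == b).
Proof. by []. Qed.

Lemma inr_eq (x y : steiner_vert) : (inr x == inr y :> gV ext_graph) = (x == y).
Proof. by []. Qed.

Lemma ext_f_inj : injective ext_f. Proof. by move=> x y []. Qed.

Lemma ext_embedding : embedding ext_f ext_g.
Proof. by split; [|split] => [x y []|x y []|e] //; apply: joins_gends. Qed.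

Lemma ext_lengthfun : lengthfun ext_len.
Proof. by case=> [e|[e|a]] /=. Qed.

Lemma tree_V_steiner (x : steiner_vert) : (inr x : gV ext_graph) \in tree_V.
Proof. by rewrite inE. Qed.

Lemma copy_joins (e : steiner_edge) a b : joins (val e) a b ->
  joins (G := ext_graph) (inr (inl e)) (inr (to_steiner a)) (inr (to_steiner b)).
Proof. by case/joins_ends => -[-> ->]; rewrite /joins /= eqxx ?orbT. Qed.

Lemma copy_incid (e : steiner_edge) (x : steiner_vert) :
  incid (G := ext_graph) (inr (inl e)) (inr x) = incid (val e) (val x).
Proof.
by case: (steiner_gends e) => h1 h2; rewrite /incid /= !inr_eq -!val_eqE /= !to_steinerK.
Qed.

Lemma tree_degree_terminal a : a \in A -> degree tree_E (inl a : gV ext_graph) = 1%N.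
Proof.
move=> aA; apply/eqP/cards1P; exists (inr (inr (Sub a aA))).
apply/setP => -[e|[e|b]]; rewrite !inE //=.
by rewrite inl_eq orbF; exact: (val_eqE b (Sub a aA)).
Qed.

Hypothesis cardA : (1 < #|A|)%N.

(* A copied vertex of f @: A has its pendant edge besides its edges in the copy;
   any other copied vertex is not a leaf of the minimal (VS, ES). *)
Lemma tree_degree_steiner (x : steiner_vert) : (1 < degree tree_E (inr x : gV ext_graph))%N.
Proof.
have [fi _] := emb.
have [w wA xw] : exists2 w, w \in f @: A & val x != w.
  have /card_gt1P [y [z [yA zA yz]]] : (1 < #|f @: A|)%N by rewrite card_imset.
  by have [xy|] := eqVneq (val x) y; [exists z; rewrite // xy | exists y].
have [e1 e1E i1] := connect_incid (connectedP _ _ cnS _ _ (valP x) (subsetP sAS _ wA)) xw.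
case: (boolP (val x \in f @: A)) => [/imsetP [a aA xa]|nx].
  apply: (degree_gt1 (G := ext_graph) (e1 := inr (inl (Sub e1 e1E))) (e2 := inr (inr (Sub a aA))));
    rewrite ?inE //.
    by rewrite copy_incid.
  by rewrite /incid /= inr_eq -val_eqE /= -xa /to_steiner valKd eqxx.
have d1 : degree ES (val x) != 1%N.
  by apply: contra nx => /eqP; apply: (min_steiner_leaf lf sgS cnS sAS minS (valP x)).
have d0 : (0 < degree ES (val x))%N by apply/card_gt0P; exists e1; rewrite inE e1E.
have /card_gt1P [y1 [y2 []]] : (1 < degree ES (val x))%N by rewrite ltn_neqAle eq_sym d1.
rewrite !inE => /andP [y1E j1] /andP [y2E j2] ne.
apply: (degree_gt1 (G := ext_graph) (e1 := inr (inl (Sub y1 y1E))) (e2 := inr (inl (Sub y2 y2E))));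
  by rewrite ?inE ?copy_incid.
Qed.

Lemma tree_leaves : leaves tree_V tree_E = ext_f @: A.
Proof.
apply/setP => -[a|x]; rewrite /leaves !inE /=.
  case: (boolP (a \in A)) => [aA|naA]; first by rewrite tree_degree_terminal // imset_f.
  by apply/esym/imsetP => -[b bA [ab]]; rewrite ab bA in naA.
rewrite eqn_leq leqNgt tree_degree_steiner /=.
by apply/esym/imsetP => -[].
Qed.

Lemma tree_subgraph : subgraphb tree_V tree_E.
Proof. by apply/subgraphP => -[e|[e|b]]; rewrite !inE //= => _; split => //; apply: valP. Qed.

Lemma tree_connected : connectedb tree_V tree_E.
Proof.
suff hub v : v \in tree_V -> connect (adj tree_E) v (inr s0).
  apply/connectedP => x y /hub xs /hub ys.
  by apply: connect_trans xs _; rewrite connect_adjC.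
have steiner_hub (x : steiner_vert) : connect (adj tree_E) (inr x : gV ext_graph) (inr s0).
  have := connect_homo (e2 := adj tree_E) (phi := fun w => inr (to_steiner w) : gV ext_graph)
    (connectedP _ _ cnS _ _ (valP x) (valP s0)).
  rewrite /to_steiner !valKd; apply => a b /adjP [e eE j].
  apply: connect1; apply/adjP; exists (inr (inl (Sub e eE))); first by rewrite inE.
  exact: copy_joins.
case: v => [a|x] //; rewrite inE /= => aA.
apply: connect_trans (steiner_hub (to_steiner (f a))).
apply: connect1; apply/adjP; exists (inr (inr (Sub a aA))); first by rewrite inE.
by rewrite /joins /= eqxx.
Qed.

Definition proj_vert (v : gV ext_graph) : gV G :=
  match v with inl a => f a | inr x => val x end.

Lemma tree_bridge e : e \in tree_E -> ~~ connectedb tree_V (tree_E :\ e).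
Proof.
case: e => [e|[c|b]]; rewrite inE // => _; apply/negP => /connectedP cn.
  case/negP: (min_steiner_bridge lf sgS sAS minS (valP c)).
  apply/connectedP => x y xV yV.
  have := connect_homo (phi := proj_vert) (e2 := adj (ES :\ val c))
    (cn _ _ (tree_V_steiner (to_steiner x)) (tree_V_steiner (to_steiner y))).
  rewrite /= !to_steinerK //; apply=> u v /adjP [[e|[d|a]] + j]; rewrite !inE //=; last first.
    by case/joins_ends: j => -[-> ->] /=; rewrite to_steinerK ?terminal_in // connect0.
  move=> /andP [ne _]; apply: connect1; apply/adjP; exists (val d).
    by rewrite !inE (valP d) andbT; apply: contra ne => /eqP /val_inj ->.
  case: (steiner_gends d) => h1 h2.
  by case/joins_ends: j => -[-> ->] /=; rewrite !to_steinerK //; [|rewrite joinsC];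
    apply: joins_gends.
have bV : (inl (val b) : gV ext_graph) \in tree_V by rewrite inE (valP b).
have [e eE] := connect_incid (cn _ _ bV (tree_V_steiner s0)) isT.
case: e eE => [e|[d|a]]; rewrite !inE //= /incid /= inl_eq orbF => /andP [ne _] /eqP ab.
by case/negP: ne; apply/eqP; congr (inr (inr _)); apply: val_inj.
Qed.

Lemma tree_treeb : treeb tree_V tree_E.
Proof.
apply/and4P; split; [exact: tree_subgraph | | exact: tree_connected |].
  by apply/set0Pn; exists (inr s0); rewrite inE.
by apply/forall_inP => e; apply: tree_bridge.
Qed.

Lemma tree_len : len ext_len tree_E = len l ES + #|A|%:R * eps.
Proof.
rewrite /len big_mkcond big_sumType /= big1 ?add0r => [|i _]; last by rewrite inE.
rewrite big_sumType /= (eq_bigr (fun i : steiner_edge => l (val i))) => [|i _];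
  last by rewrite inE.
rewrite (eq_bigr (fun i : terminal => eps)) => [|i _]; last by rewrite inE.
rewrite [in RHS](big_sub ES) /= sumr_const card_sig mulr_natl.
by rewrite cardE /= -cardE.
Qed.

Variable e0 : gE G.

(* The pendant edges are contracted; [proj_edge] sends them to an arbitrary [e0]. *)
Definition proj_edge (e : gE ext_graph) : gE G :=
  match e with inl e => g e | inr (inl e) => val e | inr (inr _) => e0 end.

Definition copy_edges : {set gE ext_graph} :=
  [set e | if e is inr (inl _) then true else false].

Lemma tree_sd_proper (B : {set gV ext_graph}) : B \proper leaves tree_V tree_E ->
  ole (sd l [set: gV G] [set: gE G] (f @: (ext_f @^-1: B))) (sd ext_len tree_V tree_E B).
Proof.
rewrite tree_leaves => /properP [sB _].
apply: sd_le_dominated => -[VP EP] /and5P [sg sVP sEP cn sBP] /=.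
have HD e : e \in EP -> e \in copy_edges ->
    joins (proj_edge e) (proj_vert (gends e).1) (proj_vert (gends e).2).
  case: e => [e|[d|b]]; rewrite inE //= => _ _.
  by case: (steiner_gends d) => h1 h2; rewrite !to_steinerK //; apply: joins_gends.
have HnD e : e \in EP -> e \notin copy_edges ->
    proj_vert (gends e).1 = proj_vert (gends e).2.
  case: e => [e|[d|b]]; rewrite inE //= => eP _; last by rewrite to_steinerK ?terminal_in.
  by move: (subsetP sEP _ eP); rewrite inE.
have /andP [sg' cn'] := connected_image sg cn HD HnD.
exists (proj_vert @: VP, proj_edge @: (EP :&: copy_edges)).
  rewrite /steinerb /= sg' cn' !subsetT /=; apply/subsetP => _ /imsetP [a aB ->].
  by rewrite (_ : f a = proj_vert (inl a)) // imset_f // (subsetP sBP) //; rewrite inE in aB.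
rewrite /= /len big_imset /=; last first.
  move=> [e|[d|b]] [e'|[d'|b']]; rewrite !inE /= ?andbF //= => _ _ dd'.
  by congr (inr (inl _)); apply: val_inj.
rewrite (eq_bigr ext_len) => [|[e|[d|b]]]; rewrite ?inE ?andbF //.
exact: (len_subset ext_lengthfun (subsetIl EP copy_edges)).
Qed.

Lemma ext_shortcut_tree :
  olt (Some (len l ES + #|A|%:R * eps)) (sd (l \o g) [set: gV H] [set: gE H] A) ->
  (forall B : {set gV H}, B \proper A ->
     sd (l \o g) [set: gV H] [set: gE H] B = sd l [set: gV G] [set: gE G] (f @: B)) ->
  shortcut_tree ext_f ext_g tree_V tree_E ext_len.
Proof.
move=> lt_len geoA; split; [|split; [|split; [exact: tree_treeb|split; [|split; [|split]]]]].
- by case=> [a|x]; [right; rewrite imset_f | left; rewrite inE].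
- by case=> [e|e]; [right; rewrite imset_f | left; rewrite inE].
- rewrite tree_leaves; apply/setP => -[a|x]; rewrite !inE /=; last first.
    by apply/idP/idP => /imsetP [].
  by rewrite -[inl a]/(ext_f a) !mem_imset ?inE ?andbT // => x y [].
- by apply/setP => -[e|e]; rewrite !inE //=; apply/imsetP => -[].
- by rewrite tree_leaves (preimset_imset _ ext_f_inj) tree_len.
move=> B pB; rewrite (_ : ext_len \o ext_g = l \o g) // geoA; last first.
  have : ext_f @: A \subset codom ext_f by apply/subsetP => _ /imsetP [a _ ->]; apply: codom_f.
  by move/preimset_proper => /(_ B); rewrite (preimset_imset _ ext_f_inj) -tree_leaves; apply.
exact: tree_sd_proper.
Qed.

End ShortcutFromSteiner.

Lemma olt_add_small (R : realFieldType) (m : R) (t : option R) (n : nat) : (0 < n)%N ->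
  olt (Some m) t -> exists2 eps : R, 0 < eps & olt (Some (m + n%:R * eps)) t.
Proof.
move=> n_gt0; case: t => [s|] /= ms; last by exists 1.
have n_neq0 : n%:R != 0 :> R by rewrite pnatr_eq0 -lt0n.
exists ((s - m) / (2 * n%:R)); first by rewrite divr_gt0 ?subr_gt0 // mulr_gt0 ?ltr0n.
have -> : n%:R * ((s - m) / (2 * n%:R)) = (s - m) / 2 by field.
lra.
Qed.

Lemma shortcut_tree_of_sd_gap (R : realFieldType) (H G : graph) (f : gV H -> gV G)
    (g : gE H -> gE G) (l : gE G -> R) (A : {set gV H}) :
  embedding f g -> lengthfun l -> (1 < #|A|)%N ->
  (forall B : {set gV H}, B \proper A ->
     sd (l \o g) [set: gV H] [set: gE H] B = sd l [set: gV G] [set: gE G] (f @: B)) ->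
  olt (sd l [set: gV G] [set: gE G] (f @: A)) (sd (l \o g) [set: gV H] [set: gE H] A) ->
  exists (G' : graph) (f' : gV H -> gV G') (g' : gE H -> gE G') (VT : {set gV G'})
    (ET : {set gE G'}) (l' : gE G' -> R),
    [/\ embedding f' g', lengthfun l', shortcut_tree f' g' VT ET l' &
        #|leaves VT ET| = #|A|].
Proof.
move=> emb lf A_gt1 geoA; case sdA: (sd _ _ _ (f @: A)) => [m|] // lt_m.
have [[VS ES] /and5P [sgS _ _ cnS sAS] [mE minS]] := sd_SomeP sdA.
rewrite /= -mE in sgS cnS sAS minS lt_m.
have [a aA] : exists a, a \in A by apply/set0Pn; rewrite -card_gt0 ltnW.
have [b bA ab] : exists2 b, b \in A & b != a.
  have /card_gt1P [y [z [yA zA yz]]] := A_gt1.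
  by have [ay|] := eqVneq y a; [exists z; rewrite // -ay eq_sym | exists y].
have faV : f a \in VS by apply: (subsetP sAS); rewrite imset_f.
have fbV : f b \in VS by apply: (subsetP sAS); rewrite imset_f.
have [e0 _ _] : exists2 e, e \in ES & incid e (f a).
  apply: connect_incid (connectedP _ _ cnS _ _ faV fbV) _.
  by apply: contra ab => /eqP/(proj1 emb) ->.
have [eps eps_gt0 lt_eps] := olt_add_small (n := #|A|) (ltnW A_gt1) lt_m.
pose s0 : steiner_vert VS := Sub (f a) faV.
exists (ext_graph f A sgS s0), (ext_f f A sgS s0), (ext_g f A sgS s0),
  (tree_V f A sgS s0), (tree_E f A sgS s0), (ext_len g l eps (s0 := s0)); split.
- exact: ext_embedding.
- exact: ext_lengthfun.
- exact: ext_shortcut_tree emb lf eps_gt0 sgS cnS sAS minS s0 A_gt1 e0 lt_eps geoA.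
- by rewrite (tree_leaves emb lf sgS cnS sAS minS s0 A_gt1) card_imset // => x y [].
Qed.

Lemma in_Hk_of_shortcut_leaves (R : realFieldType) (k : nat) (H : graph) : (2 <= k)%N ->
  (forall (G : graph) (f : gV H -> gV G) (g : gE H -> gE G)
          (VT : {set gV G}) (ET : {set gE G}) (l : gE G -> R),
     embedding f g -> lengthfun l -> shortcut_tree f g VT ET l ->
     (#|leaves VT ET| <= k)%N) ->
  in_Hk R k H.
Proof.
move=> k_ge2 few_leaves G f g l emb lf geo_k _ A _.
elim: {A}#|A| {-2}A (leqnn #|A|) => [|n IHn] A A_le.
  by apply: geo_k; rewrite (leq_trans A_le).
have [A_le_k|k_lt_A] := leqP #|A| k; first exact: geo_k.
apply: ole_anti; last exact: sd_embedding_le.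
apply: contraT; rewrite -oltNge => /(shortcut_tree_of_sd_gap emb lf) [].
- exact: leq_trans k_ge2 (ltnW k_lt_A).
- by move=> B /proper_card B_lt; apply: IHn; rewrite -ltnS (leq_trans B_lt A_le).
move=> G' [f' [g' [VT [ET [l' [emb' lf' sc cardL]]]]]].
by have := few_leaves _ _ _ _ _ _ emb' lf' sc; rewrite cardL leqNgt k_lt_A.
Qed.

Section ShortcutTree.
Variables (R : realFieldType) (H G : graph) (f : gV H -> gV G) (g : gE H -> gE G).
Variables (VT : {set gV G}) (ET : {set gE G}) (l : gE G -> R).
Hypotheses (emb : embedding f g) (lf : lengthfun l) (sc : shortcut_tree f g VT ET l).

Local Notation L := (leaves VT ET).

Lemma f_inj : injective f. Proof. by case: emb. Qed.
Lemma g_inj : injective g. Proof. by case: emb => _ []. Qed.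
Lemma joins_fg e : joins (g e) (f (gends e).1) (f (gends e).2). Proof. by case: emb => _ []. Qed.

Lemma notin_tree_edge e : e \notin ET -> e \in g @: [set: gE H].
Proof. by case: sc => _ [/(_ e) [->|]]. Qed.

Lemma g_notin_tree_edge e : g e \notin ET.
Proof.
case: sc => _ [_ [_ [_ [disj _]]]]; apply/negP => eT.
have : g e \in ET :&: (g @: [set: gE H]) by rewrite inE eT imset_f.
by rewrite disj inE.
Qed.

Lemma incid_g_image e v : incid (g e) v -> v \in f @: [set: gV H].
Proof.
by case: (joins_ends (joins_fg e)) => -[e1 e2]; rewrite /incid -e1 -e2 => /orP [] /eqP <-;
  rewrite imset_f.
Qed.

Lemma incid_tree_edge e v : v \notin f @: [set: gV H] -> incid e v -> e \in ET.
Proof.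
move=> nv ev; apply: contraT => /notin_tree_edge /imsetP [e' _ ee'].
by rewrite ee' in ev; case/negP: nv; apply: incid_g_image ev.
Qed.

Lemma leavesE : VT :&: (f @: [set: gV H]) = L.
Proof. by case: sc => _ [_ [_ [-> _]]]. Qed.

Lemma leaf_image v : v \in L -> v \in f @: [set: gV H].
Proof. by rewrite -leavesE => /setIP []. Qed.

Lemma tree_image_leaf v : v \in VT -> v \in f @: [set: gV H] -> v \in L.
Proof. by rewrite -leavesE inE => -> ->. Qed.

Lemma shortcut_treeb : treeb VT ET.
Proof. by case: sc => _ [_ [t _]]. Qed.

Lemma shortcut_sd_proper (B : {set gV G}) : B \proper L ->
  ole (sd (l \o g) [set: gV H] [set: gE H] (f @^-1: B)) (sd l VT ET B).
Proof. by case: sc => _ [_ [_ [_ [_ [_]]]]]; apply. Qed.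

Lemma shortcut_sd_leaves :
  olt (Some (len l ET)) (sd (l \o g) [set: gV H] [set: gE H] (f @^-1: L)).
Proof. by case: sc => _ [_ [_ [_ [_ []]]]]. Qed.

Lemma leaf_degree x : x \in L -> degree ET x = 1%N.
Proof. by rewrite inE => /andP [_ /eqP]. Qed.

Lemma connect_image (EP : {set gE H}) x y : connect (adj EP) x y ->
  connect (adj (g @: EP)) (f x) (f y).
Proof.
move/connect_homo; apply=> a b /adjP [e eP j]; apply: connect1; apply/adjP.
by exists (g e); [rewrite imset_f | apply: joins_image (joins_fg e) j].
Qed.

Lemma steiner_pullback (A : {set gV H}) VS ES a : a \in A -> ES :&: ET = set0 ->
  steinerb [set: gV G] [set: gE G] (f @: A) (VS, ES) ->
  exists2 p, steinerb [set: gV H] [set: gE H] A p & len (l \o g) p.2 <= len l ES.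
Proof.
move=> aA noT /and5P [/= sg _ _ cn sA].
have sEg : ES \subset g @: [set: gE H].
  apply/subsetP => e eE; apply: notin_tree_edge; apply/negP => eT.
  have : e \in ES :&: ET by rewrite inE eE eT.
  by rewrite noT inE.
have sVf : VS \subset f @: [set: gV H].
  apply/subsetP => v vV; have faV : f a \in VS by rewrite (subsetP sA) ?imset_f.
  have [->|ne] := eqVneq v (f a); first by rewrite imset_f.
  have [e eE ev] := connect_incid (connectedP _ _ cn _ _ vV faV) ne.
  by case/imsetP: (subsetP sEg _ eE) => e' _ ee'; rewrite ee' in ev; apply: incid_g_image ev.
pose finv w := odflt a [pick x | f x == w].
have finvK x : finv (f x) = x.
  by rewrite /finv; case: pickP => [y /eqP /f_inj //|/(_ x)]; rewrite eqxx.
exists (f @^-1: VS, g @^-1: ES); last by rewrite /= -len_imset ?imset_preimset //; exact: g_inj.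
rewrite /steinerb /= !subsetT /=; apply/and3P; split.
- apply/subgraphP => e'; rewrite inE => /(subgraphP _ _ sg) [].
  by case: (joins_ends (joins_fg e')) => -[<- <-]; rewrite !inE.
- apply/connectedP => x y; rewrite !inE => xV yV.
  rewrite -(finvK x) -(finvK y); apply: (connect_homo (connectedP _ _ cn _ _ xV yV)).
  move=> u w /adjP [e eE j]; case/imsetP: (subsetP sEg _ eE) => e' _ ee'.
  rewrite ee' in eE j; apply: connect1; apply/adjP; exists e'; first by rewrite inE.
  by case: (joins_ends j) (joins_ends (joins_fg e')) => -[-> ->] [] [<- <-];
    rewrite !finvK ?joins_gends // joinsC joins_gends.
- by apply/subsetP => x xA; rewrite inE (subsetP sA) // imset_f.
Qed.

Lemma tree_subgraph_ET : subgraphb VT ET.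
Proof. by case/and4P: shortcut_treeb. Qed.

Section TreeComponent.
Variables (A : {set gV H}) (VS : {set gV G}) (ES : {set gE G}) (e0 : gE G).
Hypotheses (sgS : subgraphb VS ES) (cnS : connectedb VS ES) (sAS : f @: A \subset VS).
Hypotheses (e0S : e0 \in ES) (e0T : e0 \in ET).

Definition shrinks (p : {set gV G} * {set gE G}) : bool :=
  [&& steinerb [set: gV G] [set: gE G] (f @: A) p, (#|p.2 :&: ET| < #|ES :&: ET|)%N
    & len l p.2 <= len l ES].

Definition tree_comp := component (ES :&: ET) (gends e0).1.
Definition tree_comp_edges := component_edges (ES :&: ET) (gends e0).1.

Lemma gends_e0_comp : (gends e0).1 \in tree_comp.
Proof. by rewrite inE connect0. Qed.

Lemma e0_comp_edges : e0 \in tree_comp_edges.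
Proof. by rewrite inE inE e0S e0T gends_e0_comp. Qed.

Lemma tree_comp_edges_gends e : e \in tree_comp_edges ->
  (gends e).1 \in tree_comp /\ (gends e).2 \in tree_comp.
Proof. exact: (subgraphP _ _ (component_subgraph _ _)). Qed.

Lemma tree_comp_VS : tree_comp \subset VS.
Proof.
apply/subsetP => w; rewrite inE; apply: connect_subgraph (subgraph_subset sgS (subsetIl _ _)) _.
by case: (subgraphP _ _ sgS e0 e0S).
Qed.

Lemma tree_comp_VT : tree_comp \subset VT.
Proof.
apply/subsetP => w; rewrite inE.
apply: connect_subgraph (subgraph_subset tree_subgraph_ET (subsetIr _ _)) _.
by case: (subgraphP _ _ tree_subgraph_ET e0 e0T).
Qed.

Lemma tree_comp_edges_incid e w : e \in ES -> incid e w ->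
  w \in tree_comp -> w \notin L -> e \in tree_comp_edges.
Proof.
move=> eE ew wZ wL.
have eT : e \in ET.
  apply: incid_tree_edge ew; apply: contra wL.
  exact: tree_image_leaf (subsetP tree_comp_VT _ wZ).
have eTS : e \in ES :&: ET by rewrite inE eE eT.
rewrite inE eTS /=; case/orP: ew => /eqP ew; first by rewrite ew.
by rewrite (component_gends _ eTS) ew.
Qed.

Lemma not_inner e w : e \in ES -> e \notin tree_comp_edges -> incid e w ->
  w \notin tree_comp :\: L.
Proof.
move=> eE eC ew; apply/negP; rewrite in_setD => /andP [wL wZ].
by case/negP: eC; apply: tree_comp_edges_incid ew wZ wL.
Qed.

Lemma tree_comp_leaf a : a \in A -> tree_comp :&: L != set0.
Proof.
move=> aA; apply/negP => /eqP noL.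
have nL w : w \in tree_comp -> w \notin L.
  move=> wZ; apply/negP => wL.
  have : w \in tree_comp :&: L by rewrite inE wZ wL.
  by rewrite noL inE.
have clZ : closed (adj ES) (mem tree_comp).
  apply: intro_closed; first exact: sym_connect_sym (adj_sym ES).
  move=> x y /adjP [e eE j] xZ.
  have [ex ey] := joins_incid j.
  have [h1 h2] := tree_comp_edges_gends (tree_comp_edges_incid eE ex xZ (nL _ xZ)).
  by case: (joins_ends j) => -[_ ->].
have faZ : f a \in tree_comp.
  rewrite -(closed_connect clZ (connectedP _ _ cnS _ _ (subsetP tree_comp_VS _ gends_e0_comp) _)).
    exact: gends_e0_comp.
  by rewrite (subsetP sAS) ?imset_f.
by case/negP: (nL _ faZ); rewrite tree_image_leaf ?imset_f // (subsetP tree_comp_VT).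
Qed.

Section Surgery.
Variables (VP : {set gV H}) (EP : {set gE H}) (b0 : gV G).
Hypotheses (sgP : subgraphb VP EP) (cnP : connectedb VP EP).
Hypotheses (sBP : f @^-1: (tree_comp :&: L) \subset VP) (b0B : b0 \in tree_comp :&: L).

Definition surgery_V := (VS :\: (tree_comp :\: L)) :|: f @: VP.
Definition surgery_E := (ES :\: tree_comp_edges) :|: g @: EP.

Lemma comp_leaves_image : tree_comp :&: L \subset f @: VP.
Proof.
apply/subsetP => w wB; have /imsetP [x _ wx] := leaf_image (subsetP (subsetIr _ _) _ wB).
by rewrite wx imset_f // (subsetP sBP) // inE -wx.
Qed.

Lemma surgery_connect_image x y : x \in f @: VP -> y \in f @: VP ->
  connect (adj surgery_E) x y.
Proof.
move=> /imsetP [u uP ->] /imsetP [v vP ->].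
exact: connect_adj_subset (subsetUr _ _) (connect_image (connectedP _ _ cnP _ _ uP vP)).
Qed.

Lemma surgery_subgraph : subgraphb surgery_V surgery_E.
Proof.
apply/subgraphP => e; rewrite in_setU => /orP [|/imsetP [e' e'P ->]].
  rewrite in_setD => /andP [eC eE]; case: (subgraphP _ _ sgS e eE) => h1 h2.
  case: (incid_gends e) => /(not_inner eE eC) n1 /(not_inner eE eC) n2.
  by rewrite !in_setU in_setD n1 h1 in_setD n2 h2.
case: (subgraphP _ _ sgP e' e'P) => h1 h2.
by case: (joins_ends (joins_fg e')) => -[<- <-]; rewrite !in_setU !imset_f ?orbT.
Qed.

Lemma surgery_connected : connectedb surgery_V surgery_E.
Proof.
suff hub w : w \in surgery_V -> connect (adj surgery_E) w b0.
  apply/connectedP => x y /hub xb /hub yb.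
  by apply: connect_trans xb _; rewrite connect_adjC.
have b0P : b0 \in f @: VP := subsetP comp_leaves_image _ b0B.
rewrite in_setU in_setD => /orP [/andP [wZL wV]|wP]; last exact: surgery_connect_image.
pose phi z := if z \in tree_comp :\: L then b0 else z.
have phi_b0 : phi b0 = b0 by rewrite /phi in_setD; case/setIP: b0B => _ ->.
suff : connect (adj surgery_E) (phi w) (phi b0) by rewrite phi_b0 /phi (negPf wZL).
have b0V : b0 \in VS by rewrite (subsetP tree_comp_VS) // (subsetP (subsetIl _ _) _ b0B).
apply: (connect_homo (connectedP _ _ cnS _ _ wV b0V)).
move=> x y /adjP [e eE j]; have [ex ey] := joins_incid j.
case: (boolP (e \in tree_comp_edges)) => eC.
  have phiB z : z \in tree_comp -> phi z \in f @: VP.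
    move=> zZ; rewrite /phi in_setD zZ andbT; case: ifP => // /negbFE zL.
    by rewrite (subsetP comp_leaves_image) // inE zZ.
  have [h1 h2] := tree_comp_edges_gends eC.
  by case: (joins_ends j) => -[-> ->]; apply: surgery_connect_image; apply: phiB.
rewrite /phi (negPf (not_inner eE eC ex)) (negPf (not_inner eE eC ey)).
by apply: connect1; apply/adjP; exists e; rewrite // in_setU in_setD eC eE.
Qed.

Lemma surgery_terminals : f @: A \subset surgery_V.
Proof.
apply/subsetP => _ /imsetP [a aA ->]; rewrite in_setU; apply/orP; left.
rewrite in_setD (subsetP sAS) ?imset_f // andbT in_setD negb_and negbK.
case: (boolP (f a \in tree_comp)) => faZ; last by rewrite orbT.
by rewrite tree_image_leaf ?imset_f // (subsetP tree_comp_VT).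
Qed.

Lemma surgery_tree_edges : (#|surgery_E :&: ET| < #|ES :&: ET|)%N.
Proof.
apply: proper_card; apply/properP; split.
  apply/subsetP => e; rewrite !in_setI in_setU in_setD => /andP [/orP [/andP [_ ->] //|]].
  by case/imsetP => e' _ ->; rewrite (negPf (g_notin_tree_edge e')).
exists e0; first by rewrite inE e0S e0T.
rewrite in_setI in_setU in_setD e0_comp_edges /= negb_and; apply/orP; left.
by apply/imsetP => -[e' _ ee']; move: e0T; rewrite ee' (negPf (g_notin_tree_edge e')).
Qed.

Lemma surgery_len : len (l \o g) EP <= len l tree_comp_edges -> len l surgery_E <= len l ES.
Proof.
move=> lePC; apply: le_trans (len_setU _ _ lf) _.
rewrite len_imset; last exact: g_inj.
have sEC : tree_comp_edges \subset ES.
  exact: subset_trans (component_edges_subset _ _) (subsetIl _ _).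
by rewrite (len_setD l sEC) addrC lerD2r.
Qed.

End Surgery.

Lemma shrinks_of_proper_leaves a : a \in A -> tree_comp :&: L \proper L ->
  exists p, shrinks p.
Proof.
move=> aA pB; have [b0 b0B] := set0Pn _ (tree_comp_leaf aA).
have wC : steinerb VT ET (tree_comp :&: L) (tree_comp, tree_comp_edges).
  rewrite /steinerb /= component_subgraph component_connected subsetIl tree_comp_VT.
  by rewrite (subset_trans (component_edges_subset _ _) (subsetIr _ _)).
have := ole_trans (shortcut_sd_proper pB) (sd_le_steiner l wC).
case: (sd_attained (l \o g) [set: gV H] [set: gE H] (f @^-1: (tree_comp :&: L))) => [->//|].
case=> -[VP EP] /and5P [/= sgP _ _ cnP sBP] -> /= lePC.
exists (surgery_V VP, surgery_E EP); apply/and3P; split.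
- rewrite /steinerb /= (surgery_subgraph sgP) (surgery_connected cnP sBP b0B).
  by rewrite surgery_terminals !subsetT.
- exact: surgery_tree_edges.
- exact: surgery_len.
Qed.

Section AllLeaves.
Hypothesis LZ : L \subset tree_comp.

Definition pendant x := odflt e0 [pick e in ET | incid e x].
Definition pendant_end x := other_end (pendant x) x.
Definition far_side x := component (ES :\ pendant x) (pendant_end x).

Lemma pendantP x : x \in L -> [/\ pendant x \in ET, incid (pendant x) x &
  forall e, e \in ET -> incid e x -> e = pendant x].
Proof.
move/leaf_degree/eqP/cards1P => [e1 He].
have pk e : (e \in ET) && incid e x = (e == e1) by rewrite -in_set1 -He inE.
rewrite /pendant; case: pickP => [e|/(_ e1)]; last by rewrite pk eqxx.
rewrite pk => /eqP -> /=; have /andP [e1T e1x] := etrans (pk e1) (eqxx e1).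
by split => // e' e'T e'x; apply/eqP; rewrite -pk e'T.
Qed.

Lemma pendant_in x : x \in L -> pendant x \in ES.
Proof.
move=> xL; have [_ px uniq] := pendantP xL.
have [xv|xv] := eqVneq x (gends e0).1.
  by rewrite -(uniq e0 e0T) // xv; case: (incid_gends e0).
have := subsetP LZ _ xL; rewrite inE connect_adjC => /connect_incid /(_ xv) [e].
by rewrite inE => /andP [eE eT] /(uniq e eT) <-.
Qed.

Lemma pendant_gendsE x : x \in L ->
  ((gends (pendant x)).1 = x /\ (gends (pendant x)).2 = pendant_end x) \/
  ((gends (pendant x)).1 = pendant_end x /\ (gends (pendant x)).2 = x).
Proof.
move=> xL; have [_ px _] := pendantP xL.
by case: (joins_incidE px (joins_gends (pendant x))) => -[-> ->]; [left | right].
Qed.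

Lemma mem_far_side x w :
  (w \in far_side x) = connect (adj (ES :\ pendant x)) w (pendant_end x).
Proof. by rewrite inE connect_adjC. Qed.

Lemma far_side_leaf x y : x \in L -> y \in L -> y != x -> y \in far_side x.
Proof.
move=> xL yL yx; have [pT px uniq] := pendantP xL.
have pTS : pendant x \in ES :&: ET by rewrite inE pendant_in.
have uniqS e : e \in ES :&: ET -> incid e x -> e = pendant x.
  by move=> /setIP [_ eT]; apply: uniq.
have : connect (adj (ES :&: ET)) (pendant_end x) y.
  have := subsetP LZ _ yL; have := subsetP LZ _ xL; rewrite !inE => cx cy.
  apply: connect_trans cy; rewrite connect_adjC; apply: connect_trans cx (connect1 _).
  by apply/adjP; exists (pendant x) => //; apply: joins_other_end.
move/(connect_del_pendant pTS uniqS px (other_end_neq px) yx).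
by rewrite inE; apply: connect_adj_subset; apply: setSD; apply: subsetIl.
Qed.

Lemma far_side_connect x w : x \in L -> w \in VS -> w \notin far_side x ->
  connect (adj (ES :\ pendant x)) w x.
Proof.
move=> xL wV; rewrite mem_far_side => wF.
have xV : x \in VS by rewrite (subsetP tree_comp_VS) ?(subsetP LZ).
case: (connect_setD1 (pendant x) (connectedP _ _ cnS _ _ wV xV)) => // c;
  by case: (pendant_gendsE xL) => -[h1 h2]; rewrite ?h1 ?h2 in c; rewrite // c in wF.
Qed.

Lemma shrinks_far_side x : x \in L -> f @: A \subset far_side x -> exists p, shrinks p.
Proof.
move=> xL sAF; have [pT _ _] := pendantP xL; have pS := pendant_in xL.
exists (far_side x, component_edges (ES :\ pendant x) (pendant_end x)); apply/and3P; split.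
- by rewrite /steinerb /= component_subgraph component_connected sAF !subsetT.
- apply: proper_card; apply/properP; split.
    by apply: setSI; apply: subset_trans (component_edges_subset _ _) (subsetDl _ _).
  exists (pendant x); first by rewrite inE pS pT.
  by rewrite !inE eqxx.
- by apply: len_subset => //; apply: subset_trans (component_edges_subset _ _) (subsetDl _ _).
Qed.

(* A vertex of f @: A on the leaf's side of each pendant edge; by [far_side_leaf]
   these vertices are distinct. *)
Lemma leaves_le_terminals : (forall x, x \in L -> ~~ (f @: A \subset far_side x)) ->
  (#|L| <= #|A|)%N.
Proof.
move=> notF; pose h x := odflt x [pick w in f @: A | w \notin far_side x].
have hP x : x \in L -> h x \in f @: A /\ h x \notin far_side x.
  move=> xL; rewrite /h; case: pickP => [w /andP [] //|none].
  by case/subsetPn: (notF x xL) => w wA wF; move: (none w); rewrite wA wF.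
have hinj : {in L &, injective h}.
  move=> x y xL yL hxy; apply: contraTeq isT => xy; have yx : y != x by rewrite eq_sym.
  have [hA hF] := hP x xL; have [_] := hP y yL; rewrite -hxy => hFy.
  have hV : h x \in VS := subsetP sAS _ hA.
  pose E' := (ES :\ pendant y) :\ pendant x.
  have near_x z : z \in far_side x -> connect (adj E') (h x) z -> false.
    rewrite mem_far_side => zF /(connect_adj_subset (setSD _ (subsetDl _ _))) c.
    by move: hF; rewrite mem_far_side (connect_trans c zF).
  have near_y z : z \in far_side y -> connect (adj E') (h x) z -> false.
    rewrite mem_far_side => zF /(connect_adj_subset (subsetDl _ _)) c.
    by move: hFy; rewrite mem_far_side (connect_trans c zF).
  have x_far : x \in far_side y := far_side_leaf yL xL xy.
  have ux_far : pendant_end x \in far_side x by rewrite inE connect0.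
  case: (connect_setD1 (pendant x) (far_side_connect yL hV hFy)) => c;
    first exact: near_x (far_side_leaf xL yL yx) c;
    case: (pendant_gendsE xL) => -[h1 h2]; rewrite ?h1 ?h2 in c;
    first [exact: near_y x_far c | exact: near_x ux_far c].
have sub : h @: L \subset f @: A by apply/subsetP => _ /imsetP [x xL ->]; case: (hP x xL).
by rewrite -(card_in_imset hinj) -(card_imset A f_inj) subset_leq_card.
Qed.

End AllLeaves.

Lemma tree_edge_shrinks a : a \in A -> (#|A| < #|L|)%N -> exists p, shrinks p.
Proof.
move=> aA AL; have [BL|BnL] := eqVneq (tree_comp :&: L) L; last first.
  by apply: shrinks_of_proper_leaves aA _; rewrite properEneq BnL subsetIr.
have LZ : L \subset tree_comp by rewrite -BL subsetIl.
case: (boolP [exists x in L, f @: A \subset far_side x]) => [/exists_inP [x xL]|].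
  exact: shrinks_far_side.
move/exists_inPn/(leaves_le_terminals LZ); by rewrite leqNgt AL.
Qed.

End TreeComponent.

Lemma steiner_dominated (A : {set gV H}) VS ES : (#|A| < #|L|)%N ->
  steinerb [set: gV G] [set: gE G] (f @: A) (VS, ES) ->
  exists2 p, steinerb [set: gV H] [set: gE H] A p & len (l \o g) p.2 <= len l ES.
Proof.
move=> AL; have [n] := ubnP #|ES :&: ET|; elim: n VS ES => // n IHn VS ES.
rewrite ltnS => ESn wS; have [A0|[a aA]] := set_0Vmem A.
  exists (set0, set0); last by rewrite /len big_set0 len_ge0.
  rewrite /steinerb /= A0 !sub0set andbT; apply/andP; split.
    by apply/subgraphP => e; rewrite inE.
  by apply/connectedP => x; rewrite inE.
have [T0|[e0 /setIP [e0S e0T]]] := set_0Vmem (ES :&: ET).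
  exact: steiner_pullback aA T0 wS.
case/and5P: wS => /= sgS _ _ cnS sAS.
have [[VS' ES'] /and3P [wS' lt le]] := tree_edge_shrinks sgS cnS sAS e0S e0T aA AL.
have [p wp lp] := IHn VS' ES' (leq_trans lt ESn) wS'.
by exists p => //; apply: le_trans lp le.
Qed.

Lemma shortcut_k_geodesic k : (k < #|L|)%N -> k_geodesic k f g l.
Proof.
move=> kL A Ak; apply: ole_anti; last exact: sd_embedding_le.
by apply: sd_le_dominated => -[VS ES]; apply: steiner_dominated; apply: leq_ltn_trans Ak kL.
Qed.

Lemma shortcut_not_fully_geodesic : ~ fully_geodesic f g l.
Proof.
move=> geo; have := geo #|f @^-1: L| (f @^-1: L) (leqnn _).
rewrite imset_preimset; last by apply/subsetP => v /leaf_image.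
have /and4P [sgT _ cnT _] := shortcut_treeb.
have wT : steinerb [set: gV G] [set: gE G] L (VT, ET).
  by rewrite /steinerb /= sgT cnT !subsetT; apply/subsetP => v /setIdP [].
by move=> geoL; have := ole_olt_trans (sd_le_steiner l wT) shortcut_sd_leaves; rewrite -geoL oltxx.
Qed.

End ShortcutTree.

Lemma shortcut_leaves_of_in_Hk (R : realFieldType) (k : nat) (H : graph) : in_Hk R k H ->
  forall (G : graph) (f : gV H -> gV G) (g : gE H -> gE G)
         (VT : {set gV G}) (ET : {set gE G}) (l : gE G -> R),
    embedding f g -> lengthfun l -> shortcut_tree f g VT ET l ->
    (#|leaves VT ET| <= k)%N.
Proof.
move=> inHk G f g VT ET l emb lf sc; rewrite leqNgt; apply/negP => kL.
exact: shortcut_not_fully_geodesic sc (inHk _ _ _ _ emb lf (shortcut_k_geodesic emb lf sc kL)).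
Qed.

Theorem proposition6p2 (R : realFieldType) (k : nat) (H : graph) :
  (2 <= k)%N ->
  (in_Hk R k H <->
   forall (G : graph) (f : gV H -> gV G) (g : gE H -> gE G)
          (VT : {set gV G}) (ET : {set gE G}) (l : gE G -> R),
     embedding f g -> lengthfun l -> shortcut_tree f g VT ET l ->
     (#|leaves VT ET| <= k)%N).
Proof.
move=> k_ge2; split; first exact: shortcut_leaves_of_in_Hk.
exact: in_Hk_of_shortcut_leaves.
Qed.
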